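(* A quasivariety $\mathsf{K}$ has the weak ES property if and only if no finitely generated member of $\mathsf{K}$ has a subalgebra that is fully epic in $\mathsf{K}$.
   Context: A quasivariety is a class of similar algebras closed under isomorphic copies, subalgebras, direct products and ultraproducts. A quasivariety $\mathsf{K}$ has the weak ES property if every $\mathsf{K}$-epimorphism (homomorphism $f\colon\mathbf{A}\to\mathbf{B}$ between members of $\mathsf{K}$ such that $g\circ f=h\circ f$ implies $g=h$ for all homomorphisms $g,h$ from $\mathbf{B}$ into members of $\mathsf{K}$) between finitely generated members of $\mathsf{K}$ is surjective. $\mathbf{A}\leq\mathbf{B}$ is epic in $\mathsf{K}$ if the inclusion is a $\mathsf{K}$-epimorphism. $\mathrm{Con}_{\mathsf{K}}(\mathbf{B})$ is the set of congruences $\theta$ of $\mathbf{B}$ with $\mathbf{B}/\theta\in\mathsf{K}$. $\mathbf{A}\leq\mathbf{B}$ is full in $\mathsf{K}$ if it is proper, almost total ($B=\mathrm{Sg}^{\mathbf{B}}(A\cup\{b\})$ for some $b$), and for every $\theta\in\mathrm{Con}_{\mathsf{K}}(\mathbf{B})$ with $\theta\neq\mathrm{id}_B$ and every $b\in B$ there is $a\in A$ with $\langle a,b\rangle\in\theta$. It is fully epic in $\mathsf{K}$ if it is both full and epic in $\mathsf{K}$. *)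

From Stdlib Require List.
From mathcomp Require Import all_boot.

Set Implicit Arguments.
Unset Strict Implicit.
Unset Printing Implicit Defensive.

Section UA.
Variables (O : Type) (ar : O -> nat).

Record Alg := {
  car :> Type;
  op : forall o : O, ('I_(ar o) -> car) -> car;
  car_ne : inhabited car
}.
Arguments op : clear implicits.

Definition hom (A B : Alg) (f : A -> B) : Prop :=
  forall (o : O) (args : 'I_(ar o) -> A),
    f (op A o args) = op B o (fun k => f (args k)).

Definition surj (A B : Type) (f : A -> B) : Prop := forall b, exists a, f a = b.
Definition inj (A B : Type) (f : A -> B) : Prop := forall x y, f x = f y -> x = y.

Definition ultrafilter (I : Type) (U : (I -> Prop) -> Prop) : Prop :=
  U (fun _ => True) /\ ~ U (fun _ => False) /\
  (forall X Y : I -> Prop, U X -> (forall i, X i -> Y i) -> U Y) /\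
  (forall X Y : I -> Prop, U X -> U Y -> U (fun i => X i /\ Y i)) /\
  (forall X : I -> Prop, U X \/ U (fun i => ~ X i)).

Definition iso_to_product (I : Type) (Af : I -> Alg) (C : Alg) : Prop :=
  exists f : C -> forall i, Af i,
    (forall o (args : 'I_(ar o) -> C) i,
        f (op C o args) i = op (Af i) o (fun k => f (args k) i)) /\
    inj f /\ surj f.

(** [C] is isomorphic to the ultraproduct of [Af] over [U]: there is a
    surjective homomorphism from the direct product onto [C] whose kernel is
    the congruence [x ~ y iff {i | x i = y i} \in U]. *)
Definition iso_to_ultraproduct (I : Type) (Af : I -> Alg)
    (U : (I -> Prop) -> Prop) (C : Alg) : Prop :=
  exists f : (forall i, Af i) -> C,
    (forall o (args : 'I_(ar o) -> forall i, Af i),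
        f (fun i => op (Af i) o (fun k => args k i)) = op C o (fun k => f (args k))) /\
    surj f /\
    (forall x y, f x = f y <-> U (fun i => x i = y i)).

(** quasivariety: closed under isomorphic copies, subalgebras (together:
    anything embeddable into a member is a member), direct products and
    ultraproducts. *)
Definition quasivariety (K : Alg -> Prop) : Prop :=
  (forall (A B : Alg) (f : A -> B), K B -> hom f -> inj f -> K A) /\
  (forall (I : Type) (Af : I -> Alg) (C : Alg),
      (forall i, K (Af i)) -> iso_to_product Af C -> K C) /\
  (forall (I : Type) (Af : I -> Alg) (U : (I -> Prop) -> Prop) (C : Alg),
      (forall i, K (Af i)) -> ultrafilter U -> iso_to_ultraproduct Af U C -> K C).

Inductive Sg (B : Alg) (X : B -> Prop) : B -> Prop :=
| Sg_base : forall x, X x -> Sg X x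
| Sg_op : forall o (args : 'I_(ar o) -> B),
    (forall k, Sg X (args k)) -> Sg X (op B o args).

Definition fin_gen (B : Alg) : Prop :=
  exists l : list B, forall b, Sg (fun x => List.In x l) b.

Definition K_epi (K : Alg -> Prop) (A B : Alg) (f : A -> B) : Prop :=
  forall C : Alg, K C -> forall g h : B -> C, hom g -> hom h ->
    (forall a, g (f a) = h (f a)) -> forall b, g b = h b.

Definition weak_ES (K : Alg -> Prop) : Prop :=
  forall (A B : Alg) (f : A -> B), K A -> K B -> fin_gen A -> fin_gen B ->
    hom f -> K_epi K f -> surj f.

Definition subalg (B : Alg) (S : B -> Prop) : Prop :=
  (exists x, S x) /\
  (forall o (args : 'I_(ar o) -> B), (forall k, S (args k)) -> S (op B o args)).

Definition epic_in (K : Alg -> Prop) (B : Alg) (S : B -> Prop) : Prop :=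
  forall C : Alg, K C -> forall g h : B -> C, hom g -> hom h ->
    (forall a, S a -> g a = h a) -> forall b, g b = h b.

(** [theta \in Con_K(B)]: a congruence of [B] with [B/theta \in K]
    (the quotient is represented up to isomorphism as a surjective
    homomorphic image with kernel [theta]). *)
Definition ConK (K : Alg -> Prop) (B : Alg) (theta : B -> B -> Prop) : Prop :=
  (forall x, theta x x) /\ (forall x y, theta x y -> theta y x) /\
  (forall x y z, theta x y -> theta y z -> theta x z) /\
  (forall o (a b : 'I_(ar o) -> B), (forall k, theta (a k) (b k)) ->
      theta (op B o a) (op B o b)) /\
  exists (C : Alg) (p : B -> C), K C /\ hom p /\ surj p /\
    (forall x y, theta x y <-> p x = p y).

Definition full_in (K : Alg -> Prop) (B : Alg) (S : B -> Prop) : Prop :=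
  (exists b, ~ S b) /\
  (exists b, forall x, Sg (fun y => S y \/ y = b) x) /\
  (forall theta, ConK K theta -> (exists x y, theta x y /\ x <> y) ->
     forall b, exists a, S a /\ theta a b).

Definition fully_epic_in (K : Alg -> Prop) (B : Alg) (S : B -> Prop) : Prop :=
  full_in K S /\ epic_in K S.

End UA.

From mathcomp Require Import all_boot boolp.
From mathcomp Require classical_sets filter.
From Stdlib Require List.

Set Implicit Arguments.
Unset Strict Implicit.
Unset Printing Implicit Defensive.

(* If [S] is epic in [K] inside a finitely generated [B], an ultraproduct of
   counterexamples shows that agreement on some finite [F] included in [S]
   already forces two homomorphisms out of [B] to agree; so the finitely
   generated subalgebra generated by [F] has an epic inclusion, which weak ES
   makes onto, and [S] cannot be proper.
   Conversely, let [f : A -> B] be a non-surjective K-epimorphism with [B]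
   finitely generated.  By Zorn's lemma there is a maximal pair [(th, M)] with
   [th] in [Con_K(B)] and [M/th] a proper subalgebra of [B/th] containing the
   image of [f]: unions of chains of K-congruences are K-congruences (kernels
   of maps into ultraproducts), and finite generation keeps unions proper.
   Maximality of [M] makes [M/th] almost total, maximality of [th] makes it
   full, and it is epic because [f] is. *)

Lemma In_mem (T : eqType) (x : T) (s : seq T) : x \in s -> List.In x s.
Proof.
by elim: s => [//|y s IH]; rewrite in_cons => /orP[/eqP ->|/IH]; [left|right].
Qed.

Lemma chain_bound_In (T X : Type) (Ch : T -> Prop) (Le : T -> T -> Prop)
    (P : X -> T -> Prop) (l : list X) :
  classical_sets.total_on Ch Le -> (exists t, Ch t) ->
  (forall x s t, P x s -> Le s t -> P x t) ->
  (forall x, List.In x l -> exists t, Ch t /\ P x t) ->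
  exists t, Ch t /\ forall x, List.In x l -> P x t.
Proof.
move=> tot [t0 Ch_t0] monoP; elim: l => [|y l IH] bound.
  by exists t0; split=> // x [].
have [s [Ch_s Pys]] := bound y (or_introl erefl).
have [t [Ch_t Plt]] := IH (fun x lx => bound x (or_intror lx)).
have [st|ts] := tot s t Ch_s Ch_t.
  by exists t; split=> // x [<-|/Plt //]; exact: monoP st.
by exists s; split=> // x [<-|/Plt Pxt] //; exact: monoP ts.
Qed.

Lemma chain_bound_ord (T : Type) (Ch : T -> Prop) (Le : T -> T -> Prop)
    n (P : 'I_n -> T -> Prop) :
  classical_sets.total_on Ch Le -> (exists t, Ch t) ->
  (forall x s t, P x s -> Le s t -> P x t) ->
  (forall x, exists t, Ch t /\ P x t) -> exists t, Ch t /\ forall x, P x t.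
Proof.
move=> tot Ch0 monoP bound.
have [t [Ch_t Pt]] := chain_bound_In (l := enum 'I_n) tot Ch0 monoP (fun x _ => bound x).
by exists t; split=> // x; apply/Pt/In_mem; rewrite mem_enum.
Qed.

Lemma ultrafilter_from_base (I J : Type) (Bs : J -> I -> Prop) :
  inhabited J ->
  (forall j1 j2, exists j3, forall i, Bs j3 i -> Bs j1 i /\ Bs j2 i) ->
  (forall j, exists i, Bs j i) ->
  exists U, ultrafilter U /\ forall j, U (Bs j).
Proof.
move=> [j0] directed nonempty.
pose F := filter.filter_from classical_sets.setT Bs.
have F_proper : filter.ProperFilter F.
  apply: filter.filter_from_proper => [|j _]; last exact: nonempty.
  apply: filter.filter_fromT_filter; first by exists j0.
  by move=> j1 j2; have [j3 Bj3] := directed j1 j2; exists j3 => x /Bj3.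
have [G [G_ultra FG]] := filter.ultraFilterLemma F_proper.
have G_filter : filter.Filter G by apply: filter.filter_filter.
exists G; split; last by move=> j; apply: FG; exists j.
split; first exact: (@filter.filterT _ _ G_filter).
split; first exact: (@filter.filter_not_empty _ _ (@filter.ultra_proper _ _ G_ultra)).
split; first by move=> X Y GX XY; exact: (@filter.filterS _ _ G_filter X Y).
split; first by move=> X Y; exact: (@filter.filterI _ _ G_filter X Y).
by move=> X; exact: (@filter.in_ultra_setVsetC _ G X G_ultra).
Qed.

Section UltrafilterTheory.
Variables (I : Type) (U : (I -> Prop) -> Prop).
Hypothesis U_ultra : ultrafilter U.

Lemma uf_setS X Y : U X -> (forall i, X i -> Y i) -> U Y.
Proof. by case: U_ultra => _ [_ [UsetS _]]; exact: UsetS. Qed.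

Lemma uf_setI X Y : U X -> U Y -> U (fun i => X i /\ Y i).
Proof. by case: U_ultra => _ [_ [_ [UsetI _]]]; exact: UsetI. Qed.

Lemma uf_forall X : (forall i, X i) -> U X.
Proof. by case: U_ultra => UsetT _ allX; apply: uf_setS UsetT _ => i _. Qed.

Lemma uf_nonempty X : U X -> exists i, X i.
Proof.
case: U_ultra => _ [Uset0 _] UX; apply: contrapT => noX.
by apply: Uset0; apply: uf_setS UX _ => i Xi; apply: noX; exists i.
Qed.

Lemma uf_In_forall (T : Type) (X : T -> I -> Prop) (l : list T) :
  (forall x, List.In x l -> U (X x)) -> U (fun i => forall x, List.In x l -> X x i).
Proof.
elim: l => [|y l IH] UX; first by apply: uf_forall => i x [].
apply: uf_setS (uf_setI (UX y (or_introl erefl)) (IH (fun x lx => UX x (or_intror lx)))) _.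
by move=> i [Xy Xl] x [<-|/Xl].
Qed.

Lemma uf_ord_forall n (X : 'I_n -> I -> Prop) :
  (forall k, U (X k)) -> U (fun i => forall k, X k i).
Proof.
move=> UX; apply: uf_setS (uf_In_forall (l := enum 'I_n) (fun k _ => UX k)) _.
by move=> i Xi k; apply/Xi/In_mem; rewrite mem_enum.
Qed.

End UltrafilterTheory.

Section Algebras.
Variables (O : Type) (ar : O -> nat).

Definition prod_hom (I : Type) (Af : I -> Alg ar) (D : Alg ar)
    (q : (forall i, Af i) -> D) : Prop :=
  forall o (args : 'I_(ar o) -> forall i, Af i),
    q (fun i => op (fun k => args k i)) = op (fun k => q (args k)).

Lemma diagonal_hom (I : Type) (Af : I -> Alg ar) (B D : Alg ar)
    (q : (forall i, Af i) -> D) (g : forall i, B -> Af i) :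
  prod_hom q -> (forall i, hom (g i)) -> hom (fun x => q (fun i => g i x)).
Proof.
move=> hq hg o args; rewrite -hq; congr q.
by apply: functional_extensionality_dep => i; rewrite hg.
Qed.

Section Ultraproduct.
Variables (I : Type) (Af : I -> Alg ar) (U : (I -> Prop) -> Prop).
Hypothesis U_ultra : ultrafilter U.

Definition ultra_eq (x y : forall i, Af i) : Prop := U (fun i => x i = y i).

Lemma ultra_eq_trans x y z : ultra_eq x y -> ultra_eq y z -> ultra_eq x z.
Proof. by move=> xy yz; apply: (uf_setS U_ultra (uf_setI U_ultra xy yz)) => i [-> ->]. Qed.

Lemma ultra_eq_sym x y : ultra_eq x y -> ultra_eq y x.
Proof. by move=> xy; apply: (uf_setS U_ultra xy). Qed.

Definition ultra_class := {P : (forall i, Af i) -> Prop | exists x, P = ultra_eq x}.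

Definition uclass (x : forall i, Af i) : ultra_class :=
  exist _ (ultra_eq x) (ex_intro _ x erefl).

Definition urep (c : ultra_class) : forall i, Af i := proj1_sig (cid (proj2_sig c)).

Lemma uclass_eq x y : uclass x = uclass y <-> ultra_eq x y.
Proof.
split=> [/(congr1 (@proj1_sig _ _)) /= ->|xy]; first exact: (uf_forall U_ultra).
apply: eq_exist; apply: funext => z; apply: propext.
by split; apply: ultra_eq_trans; [apply: ultra_eq_sym|].
Qed.

Lemma urepK c : uclass (urep c) = c.
Proof.
by case: c => P Px; apply: eq_exist; rewrite /urep /=; case: cid.
Qed.

Lemma ultra_eq_urep x : ultra_eq (urep (uclass x)) x.
Proof. by apply/uclass_eq; rewrite urepK. Qed.

Lemma ultra_class_inhabited : inhabited ultra_class.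
Proof.
have elt i : exists _ : Af i, True by case: (car_ne (Af i)) => a; exists a.
exact: inhabits (uclass (fun i => proj1_sig (cid (elt i)))).
Qed.

Definition ultraproduct : Alg ar :=
  @Build_Alg O ar ultra_class
    (fun o args => uclass (fun i => op (fun k => urep (args k) i)))
    ultra_class_inhabited.

Lemma uclass_prod_hom : prod_hom (D := ultraproduct) uclass.
Proof.
move=> o args; apply/uclass_eq.
apply: (uf_setS U_ultra (uf_ord_forall U_ultra (fun k => ultra_eq_urep (args k)))).
by move=> i urep_args; congr op; apply: funext => k; rewrite urep_args.
Qed.

End Ultraproduct.

Lemma ultraproduct_in_K (K : Alg ar -> Prop) (I : Type) (Af : I -> Alg ar)
    (U : (I -> Prop) -> Prop) :
  quasivariety K -> ultrafilter U -> (forall i, K (Af i)) ->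
  exists (D : Alg ar) (q : (forall i, Af i) -> D),
    [/\ K D, prod_hom q & forall x y, q x = q y <-> U (fun i => x i = y i)].
Proof.
move=> [_ [_ K_ultra]] U_ultra KAf.
have hq := uclass_prod_hom (Af := Af) U_ultra; have kerq := uclass_eq (Af := Af) U_ultra.
exists (ultraproduct Af U), (uclass U); split=> //.
apply: (K_ultra I Af U) => //; exists (uclass U); do 2!split=> //.
by move=> c; exists (urep c); exact: urepK.
Qed.

Definition subAlg (B : Alg ar) (P : B -> Prop) (P_ne : exists x, P x)
    (P_closed : forall o (args : 'I_(ar o) -> B), (forall k, P (args k)) -> P (op args)) :
    Alg ar :=
  @Build_Alg O ar {x | P x}
    (fun o args => exist P (op (fun k => proj1_sig (args k)))
                     (P_closed o _ (fun k => proj2_sig (args k))))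
    (let: ex_intro x Px := P_ne in inhabits (exist P x Px)).

Lemma subAlg_in_K (K : Alg ar -> Prop) (B : Alg ar) (P : B -> Prop) P_ne P_closed :
  quasivariety K -> K B -> K (@subAlg B P P_ne P_closed).
Proof.
move=> [K_sub _] KB; apply: (K_sub _ B (fun x : subAlg P_ne P_closed => proj1_sig x)) => //.
by move=> [x Px] [y Py] /= xy; apply: eq_exist.
Qed.

Lemma Sg_image (A B : Alg ar) (f : A -> B) (X : A -> Prop) (Y : B -> Prop) :
  hom f -> (forall x, X x -> Y (f x)) -> forall x, Sg X x -> Sg Y (f x).
Proof.
move=> hf XY x; elim=> [y /XY /Sg_base //|o args _ IH].
by rewrite hf; apply: Sg_op.
Qed.

Lemma hom_eq_Sg (B C : Alg ar) (g h : B -> C) (X : B -> Prop) :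
  hom g -> hom h -> (forall x, X x -> g x = h x) -> forall b, Sg X b -> g b = h b.
Proof.
move=> hg hh gh b; elim=> [x /gh //|o args _ IH].
by rewrite hg hh; congr op; apply: funext.
Qed.

Lemma fin_gen_image (A B : Alg ar) (f : A -> B) :
  hom f -> surj f -> fin_gen A -> fin_gen B.
Proof.
move=> hf sf [l gen_l]; exists (List.map f l) => b; have [a <-] := sf b.
by apply: Sg_image hf _ _ (gen_l a) => x; exact: List.in_map.
Qed.

Lemma lift_list (T : Type) (P : T -> Prop) (l : list T) :
  (forall x, List.In x l -> P x) -> exists l' : list {x | P x}, List.map (@proj1_sig _ _) l' = l.
Proof.
elim: l => [|x l IH] Pl; first by exists nil.
have [l' <-] := IH (fun y ly => Pl y (or_intror ly)).
by exists (exist P x (Pl x (or_introl erefl)) :: l').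
Qed.

Lemma fin_gen_subAlg_Sg (B : Alg ar) (l : list B) P_ne P_closed :
  fin_gen (@subAlg B (Sg (fun x => List.In x l)) P_ne P_closed).
Proof.
pose P := Sg (fun x => List.In x l).
have [l' l'l] := lift_list (P := P) (l := l) (fun x lx => Sg_base lx).
exists l'; suff gen x : P x -> forall Px : P x,
    Sg (B := subAlg P_ne P_closed) (fun y => List.In y l') (exist P x Px) by case=> x Px; exact: gen.
elim=> [y ly|o args args_P IH] Py.
  have /List.in_map_iff [[z Pz] [/= zy l'z]] : List.In y (List.map (@proj1_sig _ _) l').
    by rewrite l'l.
  by apply: Sg_base; rewrite (_ : exist P y Py = exist P z Pz) //; exact: eq_exist.
have -> : exist P (op args) Py = op (a := subAlg P_ne P_closed) (fun k => exist P (args k) (args_P k)).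
  exact: eq_exist.
by apply: Sg_op => k; exact: IH.
Qed.

Lemma epic_in_finite (K : Alg ar -> Prop) (B : Alg ar) (S : B -> Prop) :
  quasivariety K -> fin_gen B -> epic_in K S ->
  exists F : list B, (forall x, List.In x F -> S x) /\
    forall C : Alg ar, K C -> forall g h : B -> C, hom g -> hom h ->
      (forall x, List.In x F -> g x = h x) -> forall b, g b = h b.
Proof.
move=> HK [l gen_l] epiS; apply: contrapT => no_F.
pose separates (F : list {x | S x}) (w : {C : Alg ar & ((B -> C) * (B -> C))%type}) :=
  [/\ K (projT1 w), hom (projT2 w).1, hom (projT2 w).2,
      forall y, List.In y F -> (projT2 w).1 (proj1_sig y) = (projT2 w).2 (proj1_sig y)
    & exists b, (projT2 w).1 b <> (projT2 w).2 b].
have /choice [w sep_w] : forall F, exists w, separates F w.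
  move=> F; apply: contrapT => no_sep; apply: no_F.
  exists (List.map (@proj1_sig _ _) F); split.
    by move=> x /List.in_map_iff [y [<- _]]; exact: proj2_sig y.
  move=> C KC g h hg hh gh b; apply: contrapT => gh_b; apply: no_sep.
  by exists (existT _ C (g, h)); split=> // [y Fy|]; [apply/gh/List.in_map | exists b].
pose incl (F F' : list {x | S x}) := forall y, List.In y F -> List.In y F'.
have [U [U_ultra U_incl]] : exists U, ultrafilter U /\ forall F, U (incl F).
  apply: ultrafilter_from_base; first exact: inhabits nil.
    move=> F1 F2; exists (F1 ++ F2) => F' F12.
    by split=> y Fy; apply/F12/List.in_or_app; [left|right].
  by move=> F; exists F.
pose g F := (projT2 (w F)).1; pose h F := (projT2 (w F)).2.
have [D [q [KD hq kerq]]] : exists (D : Alg ar) (q : (forall F, projT1 (w F)) -> D),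
    [/\ K D, prod_hom q & forall x y, q x = q y <-> U (fun F => x F = y F)].
  by apply: ultraproduct_in_K => // F; case: (sep_w F).
have hG : hom (fun x => q (fun F => g F x)).
  by apply: diagonal_hom => // F; case: (sep_w F).
have hH : hom (fun x => q (fun F => h F x)).
  by apply: diagonal_hom => // F; case: (sep_w F).
have GH := epiS D KD _ _ hG hH.
have /(uf_nonempty U_ultra) [F gh_l] : U (fun F => forall j, List.In j l -> g F j = h F j).
  apply: uf_In_forall => // j _; apply/kerq/GH => a Sa; apply/kerq.
  apply: (uf_setS U_ultra (U_incl [:: exist S a Sa])) => F incl_a.
  by case: (sep_w F) => _ _ _ gh_F _; apply: (gh_F (exist S a Sa)); apply: incl_a; left.
case: (sep_w F) => _ hg hh _ [b]; apply.
exact: hom_eq_Sg hg hh gh_l b (gen_l b).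
Qed.

Lemma weak_ES_no_fully_epic (K : Alg ar -> Prop) :
  quasivariety K -> weak_ES K ->
  ~ (exists B : Alg ar, K B /\ fin_gen B /\
       exists S : B -> Prop, subalg S /\ fully_epic_in K S).
Proof.
move=> HK wES [B [KB [genB [S [[[s0 Ss0] S_closed] [[[b0 not_Sb0] _] epiS]]]]]].
have [F [FS epiF]] := epic_in_finite HK genB epiS.
pose P := Sg (fun x => List.In x (s0 :: F)).
have PS x : P x -> S x.
  by elim=> [y [<-|/FS] //|o args _]; exact: S_closed.
have P_ne : exists x, P x by exists s0; apply: Sg_base; left.
pose A := subAlg P_ne (fun o args => @Sg_op _ _ _ _ o args).
have : surj (fun x : A => proj1_sig x).
  apply: wES => //; first exact: subAlg_in_K; first exact: fin_gen_subAlg_Sg.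
  move=> C KC g h hg hh gh; apply: epiF => // x Fx.
  exact: (gh (exist P x (Sg_base (or_intror Fx)))).
by case/(_ b0) => -[x Px] /= x_b0; apply: not_Sb0; rewrite -x_b0; exact: PS.
Qed.

Lemma ConK_ext (K : Alg ar -> Prop) (B : Alg ar) (r s : B -> B -> Prop) :
  (forall x y, r x y <-> s x y) -> ConK K r -> ConK K s.
Proof.
move=> rs; rewrite (_ : r = s) //.
by apply: funext => x; apply: funext => y; exact: propext.
Qed.

Lemma ConK_kernel (K : Alg ar -> Prop) (B D : Alg ar) (r : B -> D) :
  quasivariety K -> K D -> hom r -> ConK K (fun x y => r x = r y).
Proof.
move=> HK KD hr.
pose Im d := exists x, r x = d.
have Im_ne : exists d, Im d by case: (car_ne B) => x; exists (r x), x.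
have Im_closed o (args : 'I_(ar o) -> D) : (forall k, Im (args k)) -> Im (op args).
  by move=> /fin_all_exists [xs rxs]; exists (op xs); rewrite hr; congr op; exact: funext.
split=> [//|]; split=> [x y -> //|]; split=> [x y z -> -> //|].
split=> [o a b ab|]; first by rewrite !hr; congr op; exact: funext.
exists (subAlg Im_ne Im_closed), (fun x => exist Im (r x) (ex_intro _ x erefl)).
split; first exact: subAlg_in_K.
split; first by move=> o args; apply: eq_exist; rewrite hr.
split; first by move=> [d [x rx]]; exists x; exact: eq_exist.
by move=> x y; split=> [rxy|/(congr1 (@proj1_sig _ _)) //]; exact: eq_exist.
Qed.

Lemma ConK_preimage (K : Alg ar -> Prop) (B C : Alg ar) (p : B -> C)
    (psi : C -> C -> Prop) :
  quasivariety K -> hom p -> ConK K psi -> ConK K (fun u v => psi (p u) (p v)).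
Proof.
move=> HK hp [_ [_ [_ [_ [D [r [KD [hr [_ ker_r]]]]]]]]].
apply: (ConK_ext (r := fun u v => r (p u) = r (p v))) => [u v|].
  by rewrite ker_r.
by apply: ConK_kernel HK KD _ => o args; rewrite hp hr.
Qed.

(* The union of the chain is the kernel of the diagonal map into an
   ultraproduct of the quotients, along an ultrafilter containing all the
   upper cones of the chain. *)
Lemma ConK_chain_union (K : Alg ar -> Prop) (B : Alg ar) (T : Type) (Ch : T -> Prop)
    (th : T -> B -> B -> Prop) :
  quasivariety K -> (exists t, Ch t) ->
  classical_sets.total_on Ch (fun s t => forall x y, th s x y -> th t x y) ->
  (forall t, Ch t -> ConK K (th t)) ->
  ConK K (fun x y => exists t, Ch t /\ th t x y).
Proof.
move=> HK [t0 Ch_t0] tot ConK_th.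
pose I := {t | Ch t}.
have /choice [w w_quot] : forall i : I, exists w : {C : Alg ar & B -> C},
    [/\ K (projT1 w), hom (projT2 w)
      & forall x y, th (proj1_sig i) x y <-> projT2 w x = projT2 w y].
  move=> [t Ch_t]; have [_ [_ [_ [_ [C [p [KC [hp [_ ker_p]]]]]]]]] := ConK_th t Ch_t.
  by exists (existT _ C p).
pose above (j i : I) := forall x y, th (proj1_sig j) x y -> th (proj1_sig i) x y.
have [U [U_ultra U_above]] : exists U, ultrafilter U /\ forall j, U (above j).
  apply: ultrafilter_from_base => [|[s Ch_s] [t Ch_t]|j]; last by exists j.
    exact: inhabits (exist Ch t0 Ch_t0).
  have [st|ts] := tot s t Ch_s Ch_t; [exists (exist Ch t Ch_t)|exists (exist Ch s Ch_s)].
    by move=> i ti; split=> // x y /st; exact: ti.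
  by move=> i si; split=> // x y /ts; exact: si.
have [D [q [KD hq kerq]]] : exists (D : Alg ar) (q : (forall i, projT1 (w i)) -> D),
    [/\ K D, prod_hom q & forall x y, q x = q y <-> U (fun i => x i = y i)].
  by apply: ultraproduct_in_K => // i; case: (w_quot i).
have hr : hom (fun x => q (fun i => projT2 (w i) x)).
  by apply: diagonal_hom => // i; case: (w_quot i).
apply: ConK_ext (ConK_kernel HK KD hr) => x y; rewrite kerq; split.
  move=> /(uf_nonempty U_ultra) [i]; case: (w_quot i) => _ _ <- ixy.
  by exists (proj1_sig i); split; [exact: proj2_sig i|].
move=> [t [Ch_t txy]]; apply: (uf_setS U_ultra (U_above (exist Ch t Ch_t))) => i ti.
by case: (w_quot i) => _ _ <-; exact: ti.
Qed.

Lemma Sg_saturation (B : Alg ar) (th : B -> B -> Prop) (M X : B -> Prop) :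
  (forall o (a b : 'I_(ar o) -> B), (forall k, th (a k) (b k)) -> th (op a) (op b)) ->
  (forall o (args : 'I_(ar o) -> B), (forall k, M (args k)) -> M (op args)) ->
  (forall x, X x -> exists m, M m /\ th m x) ->
  forall y, Sg X y -> exists m, M m /\ th m y.
Proof.
move=> th_compat M_closed X_sat y; elim=> [x /X_sat //|o args _ /fin_all_exists [ms Hms]].
by exists (op ms); split; [apply: M_closed | apply: th_compat] => k; case: (Hms k).
Qed.

Section ProperPairs.
Variables (K : Alg ar -> Prop) (A B : Alg ar) (f : A -> B).
Hypothesis HK : quasivariety K.

(* [(th, M)] encodes the subalgebra [M/th] of [B/th]: it contains the image
   of [f] and misses the class of some [b]. *)
Definition proper_pair (th : B -> B -> Prop) (M : B -> Prop) : Prop :=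
  [/\ ConK K th, subalg M, forall a, M (f a) & exists b, forall m, M m -> ~ th m b].

Definition pair_le (s t : (B -> B -> Prop) * (B -> Prop)) : Prop :=
  (forall x y, s.1 x y -> t.1 x y) /\ (forall x, s.2 x -> t.2 x).

Lemma proper_pair_chain_union (Ch : (B -> B -> Prop) * (B -> Prop) -> Prop) :
  fin_gen B -> (exists t, Ch t) -> classical_sets.total_on Ch pair_le ->
  (forall t, Ch t -> proper_pair t.1 t.2) ->
  proper_pair (fun x y => exists t, Ch t /\ t.1 x y) (fun x => exists t, Ch t /\ t.2 x).
Proof.
move=> [l gen_l] Ch_ne tot pp; have [t0 Ch_t0] := Ch_ne.
have [_ [[x0 M0x0] _] fM0 _] := pp t0 Ch_t0.
split.
- apply: ConK_chain_union => // [s t Cs Ct|t /pp[] //].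
  by case: (tot s t Cs Ct) => -[st _]; [left|right].
- split; first by exists x0, t0.
  move=> o args /(chain_bound_ord tot Ch_ne) [| t [Ct Mt]].
    by move=> k s t Ms [_ st]; exact: st.
  by exists t; split=> //; have [_ [_ Mt_closed] _ _] := pp t Ct; exact: Mt_closed.
- by move=> a; exists t0; split; [|exact: fM0].
apply: contrapT => covered.
have gen_sat x : exists t, Ch t /\ exists m, t.2 m /\ t.1 m x.
  have [m [[s [Cs Msm]] [t [Ct tmx]]]] :
      exists m, (exists t, Ch t /\ t.2 m) /\ (exists t, Ch t /\ t.1 m x).
    by apply: contrapT => no_m; apply: covered; exists x => m Mm thm; apply: no_m; exists m.
  have [[_ st]|[ts _]] := tot s t Cs Ct; [exists t | exists s]; split=> //; exists m.
    by split=> //; exact: st.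
  by split=> //; exact: ts.
have sat_mono x s t :
    (exists m, s.2 m /\ s.1 m x) -> pair_le s t -> exists m, t.2 m /\ t.1 m x.
  by move=> [m [Msm smx]] [st Mst]; exists m; split; [exact: Mst | exact: st].
have [t [Ct t_sat]] := chain_bound_In (l := l) tot Ch_ne sat_mono (fun x _ => gen_sat x).
have [[_ [_ [_ [t_compat _]]]] [_ Mt_closed] _ [b no_b]] := pp t Ct.
have [m [Mm tmb]] := Sg_saturation t_compat Mt_closed t_sat (gen_l b).
exact: no_b Mm tmb.
Qed.

Lemma proper_pair_maximal th0 M0 :
  fin_gen B -> proper_pair th0 M0 ->
  exists th M, proper_pair th M /\ forall th' M', proper_pair th' M' ->
    pair_le (th, M) (th', M') -> pair_le (th', M') (th, M).
Proof.
move=> genB pp0.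
pose T := {t | proper_pair t.1 t.2}.
pose R (s t : T) := `[< pair_le (proj1_sig s) (proj1_sig t) >].
have [|r s t|C C_tot|[[th M] pp] maxt] := classical_sets.ZL_preorder (R := R) (exist _ (th0, M0) pp0).
- by move=> t; apply/asboolP.
- move=> /asboolP [rs1 rs2] /asboolP [st1 st2]; apply/asboolP.
  by split=> [x y /rs1 /st1 | x /rs2 /st2].
- have [[t0 Ct0]|C0] := pselect (exists t, C t); last first.
    by exists (exist _ (th0, M0) pp0) => s Cs; case: C0; exists s.
  pose Ch u := exists s : T, C s /\ proj1_sig s = u.
  have Ch_tot : classical_sets.total_on Ch pair_le.
    by move=> _ _ [s [Cs <-]] [t [Ct <-]]; case: (C_tot s t Cs Ct) => /asboolP; [left|right].
  have Ch_ne : exists u, Ch u by exists (proj1_sig t0), t0.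
  have Ch_pp u : Ch u -> proper_pair u.1 u.2 by case=> s [_ <-]; exact: proj2_sig s.
  have pp_union := proper_pair_chain_union genB Ch_ne Ch_tot Ch_pp.
  exists (exist (fun t => proper_pair t.1 t.2) (_, _) pp_union) => s Cs; apply/asboolP.
  by split=> [x y sxy | x sx]; exists (proj1_sig s); split=> //; exists s.
exists th, M; split=> // th' M' pp' le.
by have /asboolP := maxt (exist _ (th', M') pp') (introT (asboolP _) le).
Qed.

Lemma image_proper_pair :
  K B -> hom f -> ~ surj f -> proper_pair (fun x y => x = y) (fun x => exists a, f a = x).
Proof.
move=> KB hf not_surj; split=> [| | a |].
- exact: (ConK_kernel (r := id) HK KB).
- split=> [|o args /fin_all_exists [xs fxs]]; first by case: (car_ne A) => a; exists (f a), a.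
  by exists (op xs); rewrite hf; congr op; exact: funext.
- by exists a.
have [b not_fb] := (existsNP _).2 not_surj.
by exists b => _ [a <-] fab; apply: not_fb; exists a.
Qed.

Section MaximalPair.
Variables (th : B -> B -> Prop) (M : B -> Prop).
Hypotheses (pp : proper_pair th M)
  (th_max : forall th' M', proper_pair th' M' ->
     pair_le (th, M) (th', M') -> pair_le (th', M') (th, M)).
Variables (C : Alg ar) (p : B -> C).
Hypotheses (hp : hom p) (sp : surj p) (ker_p : forall x y, th x y <-> p x = p y).

Definition quotient_sub (c : C) : Prop := exists m, M m /\ p m = c.

Lemma quotient_subalg : subalg quotient_sub.
Proof.
have [_ [[m Mm] M_closed] _ _] := pp; split; first by exists (p m), m.
move=> o args /fin_all_exists [ms Hms]; exists (op ms); split.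
  by apply: M_closed => k; case: (Hms k).
by rewrite hp; congr op; apply: funext => k; case: (Hms k).
Qed.

Lemma quotient_sub_proper : exists c, ~ quotient_sub c.
Proof.
have [_ _ _ [b no_b]] := pp.
by exists (p b) => -[m [Mm /ker_p thmb]]; exact: no_b Mm thmb.
Qed.

(* Maximality of [M] in the second component. *)
Lemma quotient_sub_almost_total :
  exists c, forall x, Sg (fun y => quotient_sub y \/ y = c) x.
Proof.
have [ConK_th _ fM [b no_b]] := pp.
exists (p b); pose M' y := Sg (fun z => quotient_sub z \/ z = p b) (p y).
have M'_subalg : subalg M'.
  split=> [|o args M'args]; first by exists b; apply: Sg_base; right.
  by rewrite /M' hp; apply: Sg_op.
have [[b' no_b'] | covered] := pselect (exists b', forall m, M' m -> ~ th m b').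
  have M'_pp : proper_pair th M'.
    by split=> // [a|]; [apply: Sg_base; left; exists (f a) | exists b'].
  have M_M' : pair_le (th, M) (th, M') by split=> // x Mx; apply: Sg_base; left; exists x.
  have [_ M'M] := th_max M'_pp M_M'.
  by case: (no_b b (M'M b (Sg_base (or_intror erefl)))); case: ConK_th.
move=> x; have [y <-] := sp x.
have [m [M'm /ker_p <-]] : exists m, M' m /\ th m y.
  by apply: contrapT => no_m; apply: covered; exists y => m M'm thmy; apply: no_m; exists m.
exact: M'm.
Qed.

(* Maximality of [th] in the first component, applied to the preimage of [psi]. *)
Lemma quotient_sub_meets_classes (psi : C -> C -> Prop) :
  ConK K psi -> (exists x y, psi x y /\ x <> y) ->
  forall c, exists a, quotient_sub a /\ psi a c.
Proof.
move=> ConK_psi [x [y [psi_xy x_neq_y]]] c.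
have [_ M_subalg fM _] := pp.
have [psi_refl _] := ConK_psi.
pose th' u v := psi (p u) (p v).
have th_th' u v : th u v -> th' u v by move=> /ker_p; rewrite /th' => ->.
have [[b' no_b'] | covered] := pselect (exists b', forall m, M m -> ~ th' m b').
  have th'_pp : proper_pair th' M.
    by split=> //; [exact: ConK_preimage | exists b'].
  have [th'_th _] := th_max th'_pp (conj th_th' (fun x Mx => Mx)).
  have [u pu_x] := sp x; have [v pv_y] := sp y.
  have th'_uv : th' u v by rewrite /th' pu_x pv_y.
  by case: x_neq_y; rewrite -pu_x -pv_y; exact/ker_p/th'_th.
have [b <-] := sp c.
have [m [Mm th'mb]] : exists m, M m /\ th' m b.
  by apply: contrapT => no_m; apply: covered; exists b => m Mm thmb; apply: no_m; exists m.
by exists (p m); split=> //; exists m.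
Qed.

Lemma quotient_sub_epic : K_epi K f -> epic_in K quotient_sub.
Proof.
have [_ _ fM _] := pp.
move=> epi_f D KD g h hg hh gh c; have [b <-] := sp c.
have hgp : hom (fun x => g (p x)) by move=> o args; rewrite hp hg.
have hhp : hom (fun x => h (p x)) by move=> o args; rewrite hp hh.
by apply: (epi_f D KD _ _ hgp hhp) => a; apply: gh; exists (f a).
Qed.

Lemma quotient_sub_fully_epic : K_epi K f -> fully_epic_in K quotient_sub.
Proof.
move=> epi_f; split; last exact: quotient_sub_epic.
split; first exact: quotient_sub_proper.
split; first exact: quotient_sub_almost_total.
exact: quotient_sub_meets_classes.
Qed.

End MaximalPair.
End ProperPairs.

Lemma no_fully_epic_weak_ES (K : Alg ar -> Prop) :
  quasivariety K ->
  ~ (exists B : Alg ar, K B /\ fin_gen B /\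
       exists S : B -> Prop, subalg S /\ fully_epic_in K S) -> weak_ES K.
Proof.
move=> HK no_fully_epic A B f _ KB _ genB hf epi_f; apply: contrapT => not_surj.
have [th [M [pp th_max]]] :=
  proper_pair_maximal HK genB (image_proper_pair HK KB hf not_surj).
have [[_ [_ [_ [_ [C [p [KC [hp [sp ker_p]]]]]]]]] _ _ _] := pp.
apply: no_fully_epic; exists C; split=> //; split; first exact: fin_gen_image hp sp genB.
exists (quotient_sub M p); split; first exact: (quotient_subalg pp hp).
exact: (quotient_sub_fully_epic HK pp th_max hp sp ker_p epi_f).
Qed.

End Algebras.

Theorem mainTheorem4 (O : Type) (ar : O -> nat) (K : Alg ar -> Prop)
  (HK : quasivariety K) :
  weak_ES K <->
  ~ (exists B : Alg ar, K B /\ fin_gen B /\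
       exists S : B -> Prop, subalg S /\ fully_epic_in K S).
Proof.
split; [exact: weak_ES_no_fully_epic | exact: no_fully_epic_weak_ES].
Qed.
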